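(* Let $L$ be a complete subfield of $\hat{\bar L}_0$ containing $L_0$, and let $Q_1,Q_2$ be points of $\mathfrak Y_{\rm rig}\hat\otimes L$ with $\pi_{\rm rig}(Q_1)=\pi_{\rm rig}(Q_2)=P$. Write $Q^w:=w_{\rm rig}(Q)$. (1) $Q_1$ is too singular iff $Q_2$ is too singular iff $\nu_{\mathfrak X}(P)\ge e/(e+1)$; in that case $\nu_{\mathfrak Y}(Q_2^w)=1/(e+1)$. (2) If $Q_1,Q_2$ are both canonical or both anti-canonical, then $\nu_{\mathfrak Y}(Q_2^w)=1-\nu_{\mathfrak Y}(Q_1)$. (3) If $Q_1$ is canonical and $Q_2$ is anti-canonical, then $\nu_{\mathfrak Y}(Q_2^w)=e^{-1}\nu_{\mathfrak Y}(Q_1)$. (4) If $Q_1$ is anti-canonical and $Q_2$ is canonical, then $\nu_{\mathfrak Y}(Q_2^w)=1-e(1-\nu_{\mathfrak Y}(Q_1))$.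
   Context: $p$ prime; $L_0/\mathbb Q_p$ finite, ring of integers $\mathcal O_0$, uniformizer $\varpi$, residue field $\kappa\cong\mathbb F_q$; $\mathrm{val}(\varpi)=1$. $X,Y$ are curves over $\mathcal O_0$ (reduced, flat separated finite type, connected one-dimensional geometric fibres), $\pi:Y\to X$ with: $X$ smooth; $Y$ regular; $\pi\otimes\kappa$ has a section $s$; $Y\otimes\kappa$ reduced with two components meeting at $\kappa$-rational points with completed local ring $\cong\kappa[[u,v]]/(uv)$, each singular point the only point over its image; $w$ an $\mathcal O_0$-automorphism of $Y$ whose reduction interchanges the components; $\pi$ finite flat of degree $1+e$, $e>1$ an integer. $\mathfrak X_{\rm rig},\mathfrak Y_{\rm rig}$ are the Raynaud generic fibres of the formal completions along special fibres. The measures of singularity of Goren–Kassaei are functions $\nu_{\mathfrak Y}$ on points of $\mathfrak Y_{\rm rig}\hat\otimes L$ (values in $\mathbb Q\cap[0,1]$; $0$/$1$ on points specializing to nonsingular points of $s(X\otimes\kappa)$/the other component, a normalized annulus-parameter valuation on residue annuli of singular points) and $\nu_{\mathfrak X}$ on points of $\mathfrak X_{\rm rig}\hat\otimes L$ (values in $\mathbb Q_{\ge0}$, significant when $<1$), satisfying, for every point $Q$: if $\nu_{\mathfrak Y}(Q)<e/(e+1)$ ($Q$ ''canonical'') then $\nu_{\mathfrak Y}(Q)=\nu_{\mathfrak X}(\pi_{\rm rig}Q)$, and canonical points form the image of a section $\mathfrak s_{\rm rig}:\mathfrak X_{\rm rig}[0,e/(e+1))\to\mathfrak Y_{\rm rig}[0,e/(e+1))$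 of $\pi_{\rm rig}$; if $\nu_{\mathfrak Y}(Q)>e/(e+1)$ ($Q$ ''anti-canonical'') then $\nu_{\mathfrak Y}(Q)=1-e^{-1}\nu_{\mathfrak X}(\pi_{\rm rig}Q)$; $\nu_{\mathfrak Y}(Q)=e/(e+1)$ ($Q$ ''too singular'') iff $\nu_{\mathfrak X}(\pi_{\rm rig}Q)\ge e/(e+1)$; $\nu_{\mathfrak Y}(w_{\rm rig}Q)=1-\nu_{\mathfrak Y}(Q)$. *)

From HB Require Import structures.
From mathcomp Require Import all_boot all_order all_algebra.
Set Implicit Arguments. Unset Strict Implicit. Unset Printing Implicit Defensive.
Import Order.TTheory GRing.Theory Num.Theory.
Local Open Scope ring_scope.

(* Abstract interface to the Goren--Kassaei measures of singularity, for a
   fixed complete field L.  PtY / PtX stand for the points of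
   Y_rig ⊗^ L and X_rig ⊗^ L, [pi] for pi_rig, [w] for w_rig,
   [nuY], [nuX] for nu_Y, nu_X (rational valued), and [e] for the integer
   e > 1 with deg pi = 1 + e. *)

Definition thr (e : nat) : rat := e%:R / (e%:R + 1).

Record GKdata := {
  PtY : Type;
  PtX : Type;
  gk_pi : PtY -> PtX;
  gk_w : PtY -> PtY;
  nuY : PtY -> rat;
  nuX : PtX -> rat;
  e : nat;
  e_gt1 : (1 < e)%N;
  nuY_range : forall Q, 0 <= nuY Q <= 1;
  nuX_ge0 : forall P, 0 <= nuX P;
  nuY_canonical : forall Q, nuY Q < thr e -> nuY Q = nuX (gk_pi Q);
  (* canonical points form the image of a section s_rig of pi_rig over
     X_rig[0, e/(e+1)) with values in Y_rig[0, e/(e+1)) *)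
  gk_s : PtX -> PtY;
  s_section : forall P, nuX P < thr e -> gk_pi (gk_s P) = P;
  s_canonical : forall P, nuX P < thr e -> nuY (gk_s P) < thr e;
  canonical_image : forall Q, nuY Q < thr e -> Q = gk_s (gk_pi Q);
  nuY_anticanonical : forall Q, thr e < nuY Q ->
    nuY Q = 1 - (e%:R)^-1 * nuX (gk_pi Q);
  nuY_toosingular : forall Q, nuY Q = thr e <-> thr e <= nuX (gk_pi Q);
  nuY_w : forall Q, nuY (gk_w Q) = 1 - nuY Q
}.

Definition canonical (D : GKdata) (Q : PtY D) := nuY Q < thr (e D).
Definition anticanonical (D : GKdata) (Q : PtY D) := thr (e D) < nuY Q.
Definition too_singular (D : GKdata) (Q : PtY D) := nuY Q = thr (e D).

From HB Require Import structures.
From mathcomp Require Import all_boot all_order all_algebra.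
From mathcomp Require Import ring.
Import Order.TTheory GRing.Theory Num.Theory.
Local Open Scope ring_scope.

(* Every case is read off from the formula for nu_Y on the relevant locus,
   expressing nu_Y(Q1) and nu_Y(Q2) through the common value nu_X(P), and
   from nu_Y(Q^w) = 1 - nu_Y(Q). *)

Lemma subr_thr (n : nat) : 1 - thr n = 1 / (n%:R + 1).
Proof.
have n1_neq0 : n%:R + 1 != 0 :> rat by rewrite -[1]/(1%:R) -natrD pnatr_eq0 addn1.
by rewrite /thr; field.
Qed.

Section Corollary.

Variable D : GKdata.

Lemma natr_e_neq0 : (e D)%:R != 0 :> rat.
Proof. by rewrite pnatr_eq0 -lt0n (ltn_trans _ (e_gt1 D)). Qed.

Lemma too_singularE (Q : PtY D) :
  too_singular Q <-> thr (e D) <= nuX (gk_pi Q).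
Proof. exact: nuY_toosingular. Qed.

Lemma nuY_w_too_singular (Q : PtY D) :
  too_singular Q -> nuY (gk_w Q) = 1 / ((e D)%:R + 1).
Proof. by rewrite nuY_w => ->; exact: subr_thr. Qed.

End Corollary.

Theorem corollary2p4 (D : GKdata) (Q1 Q2 : PtY D) (P : PtX D)
  (h1 : gk_pi Q1 = P) (h2 : gk_pi Q2 = P) :
  [/\ (too_singular Q1 <-> too_singular Q2)
      /\ (too_singular Q2 <-> thr (e D) <= nuX P)
      /\ (too_singular Q1 -> nuY (gk_w Q2) = 1 / ((e D)%:R + 1)),
      (canonical Q1 /\ canonical Q2 \/ anticanonical Q1 /\ anticanonical Q2) ->
        nuY (gk_w Q2) = 1 - nuY Q1,
      canonical Q1 -> anticanonical Q2 ->
        nuY (gk_w Q2) = ((e D)%:R)^-1 * nuY Q1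
    & anticanonical Q1 -> canonical Q2 ->
        nuY (gk_w Q2) = 1 - (e D)%:R * (1 - nuY Q1)].
Proof.
have ts1 := @too_singularE D Q1; have ts2 := @too_singularE D Q2.
rewrite h1 in ts1; rewrite h2 in ts2.
have e_neq0 := natr_e_neq0 D.
split.
- split; first by rewrite ts1 ts2.
  split; first exact: ts2.
  by move=> /ts1 /ts2; exact: nuY_w_too_singular.
- case=> [[c1 c2]|[a1 a2]]; rewrite nuY_w.
    by rewrite (nuY_canonical c1) (nuY_canonical c2) h1 h2.
  by rewrite (nuY_anticanonical a1) (nuY_anticanonical a2) h1 h2.
- move=> c1 a2; rewrite nuY_w (nuY_canonical c1) (nuY_anticanonical a2) h1 h2.
  by field.
- move=> a1 c2; rewrite nuY_w (nuY_anticanonical a1) (nuY_canonical c2) h1 h2.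
  by field.
Qed.
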